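(* Let $\mathbb{F}$ be an algebraically closed field with $\mathrm{char}\,\mathbb{F}=2$ and $n\ge8$. Let $\underline{a}=(e_1,e_2,\mathbf{u}_1,\mathbf{v}_1,\mathbf{u}_2,\mathbf{v}_2,\mathbf{u}_3,\mathbf{v}_3,0,\ldots,0)\in\mathbf{O}^n$ and let $\underline{b}\in\mathbf{O}^n$ be such that $f(\underline{a})=f(\underline{b})$ for all $f\in S_n^{(3)}$. Then ${\rm G}_2\underline{a}={\rm G}_2\underline{b}$.
   Context: The split octonion algebra $\mathbf{O}$ is the 8-dimensional $\mathbb{F}$-vector space of formal matrices $a=\begin{pmatrix}\alpha&\mathbf{u}\\ \mathbf{v}&\beta\end{pmatrix}$ with $\alpha,\beta\in\mathbb{F}$, $\mathbf{u},\mathbf{v}\in\mathbb{F}^3$, with multiplication $\begin{pmatrix}\alpha&\mathbf{u}\\ \mathbf{v}&\beta\end{pmatrix}\begin{pmatrix}\alpha'&\mathbf{u}'\\ \mathbf{v}'&\beta'\end{pmatrix}=\begin{pmatrix}\alpha\alpha'+\mathbf{u}\cdot\mathbf{v}'&\alpha\mathbf{u}'+\beta'\mathbf{u}-\mathbf{v}\times\mathbf{v}'\\ \alpha'\mathbf{v}+\beta\mathbf{v}'+\mathbf{u}\times\mathbf{u}'&\beta\beta'+\mathbf{v}\cdot\mathbf{u}'\end{pmatrix}$ (dot product and cross product on $\mathbb{F}^3$). Trace $\mathrm{tr}(a)=\alpha+\beta$, norm $n(a)=\alpha\beta-\mathbf{u}\cdot\mathbf{v}$. With $\mathbf{c}_1,\mathbf{c}_2,\mathbf{c}_3$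 the standard basis of $\mathbb{F}^3$: $e_1$ has $\alpha=1$ and all else $0$, $e_2$ has $\beta=1$ and all else $0$, $\mathbf{u}_i$ has $\mathbf{u}=\mathbf{c}_i$ and all else $0$, $\mathbf{v}_i$ has $\mathbf{v}=\mathbf{c}_i$ and all else $0$. ${\rm G}_2=\mathrm{Aut}(\mathbf{O})$ acts diagonally on $\mathbf{O}^n$. $S_n^{(3)}$ is the set of functions on $\mathbf{O}^n$: $\underline{a}\mapsto n(a_i)$, $\underline{a}\mapsto\mathrm{tr}(a_i)$ ($1\le i\le n$), $\underline{a}\mapsto\mathrm{tr}(a_ia_j)$ ($1\le i<j\le n$), and $\underline{a}\mapsto\mathrm{tr}((a_ia_j)a_k)$ ($1\le i<j<k\le n$). *)

(* Split octonions over a field F, written in the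
   "vector matrix" (Zorn) model of the paper. *)
From HB Require Import structures.
From mathcomp Require Import all_boot all_order all_algebra.
Set Implicit Arguments. Unset Strict Implicit. Unset Printing Implicit Defensive.
Import GRing.Theory.
Local Open Scope ring_scope.

Section Oct.
Variable F : fieldType.

Record vec3 := V3 { c1 : F; c2 : F; c3 : F }.

Definition vdot (x y : vec3) : F := c1 x * c1 y + c2 x * c2 y + c3 x * c3 y.
Definition vcross (x y : vec3) : vec3 :=
  V3 (c2 x * c3 y - c3 x * c2 y) (c3 x * c1 y - c1 x * c3 y)
     (c1 x * c2 y - c2 x * c1 y).
Definition vadd (x y : vec3) : vec3 := V3 (c1 x + c1 y) (c2 x + c2 y) (c3 x + c3 y).
Definition vscale (k : F) (x : vec3) : vec3 := V3 (k * c1 x) (k * c2 x) (k * c3 x).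
Definition vopp (x : vec3) : vec3 := vscale (-1) x.
Definition vzero : vec3 := V3 0 0 0.

(* a = ( alpha  u ; v  beta ) *)
Record oct := Oct { oal : F; ou : vec3; ov : vec3; obe : F }.

Definition omul (a a' : oct) : oct :=
  Oct (oal a * oal a' + vdot (ou a) (ov a'))
      (vadd (vadd (vscale (oal a) (ou a')) (vscale (obe a') (ou a)))
            (vopp (vcross (ov a) (ov a'))))
      (vadd (vadd (vscale (oal a') (ov a)) (vscale (obe a) (ov a')))
            (vcross (ou a) (ou a')))
      (obe a * obe a' + vdot (ov a) (ou a')).

Definition oadd (a b : oct) : oct :=
  Oct (oal a + oal b) (vadd (ou a) (ou b)) (vadd (ov a) (ov b)) (obe a + obe b).
Definition oscale (k : F) (a : oct) : oct :=
  Oct (k * oal a) (vscale k (ou a)) (vscale k (ov a)) (k * obe a).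
Definition ozero : oct := Oct 0 vzero vzero 0.

Definition otr (a : oct) : F := oal a + obe a.
Definition onorm (a : oct) : F := oal a * obe a - vdot (ou a) (ov a).

Definition cv1 : vec3 := V3 1 0 0.
Definition cv2 : vec3 := V3 0 1 0.
Definition cv3 : vec3 := V3 0 0 1.
Definition oe1 : oct := Oct 1 vzero vzero 0.
Definition oe2 : oct := Oct 0 vzero vzero 1.
Definition ou_ (c : vec3) : oct := Oct 0 c vzero 0.
Definition ov_ (c : vec3) : oct := Oct 0 vzero c 0.

Definition is_G2 (g : oct -> oct) : Prop :=
  [/\ (forall x y, g (oadd x y) = oadd (g x) (g y)),
      (forall k x, g (oscale k x) = oscale k (g x)),
      (forall x y, g (omul x y) = omul (g x) (g y)) &
      bijective g].

Definition G2orbit (n : nat) (a : 'I_n -> oct) : ('I_n -> oct) -> Prop :=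
  fun c => exists g, is_G2 g /\ forall i, c i = g (a i).

Definition S3_agree (n : nat) (a b : 'I_n -> oct) : Prop :=
  [/\ (forall i, onorm (a i) = onorm (b i)),
      (forall i, otr (a i) = otr (b i)),
      (forall i j : 'I_n, (i < j)%N ->
         otr (omul (a i) (a j)) = otr (omul (b i) (b j))) &
      (forall i j k : 'I_n, (i < j)%N -> (j < k)%N ->
         otr (omul (omul (a i) (a j)) (a k)) =
         otr (omul (omul (b i) (b j)) (b k)))].

Definition std_tuple (n : nat) : 'I_n -> oct := fun i =>
  match nat_of_ord i with
  | 0 => oe1 | 1 => oe2
  | 2 => ou_ cv1 | 3 => ov_ cv1
  | 4 => ou_ cv2 | 5 => ov_ cv2
  | 6 => ou_ cv3 | 7 => ov_ cv3
  | _ => ozero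
  end.

End Oct.

(* The eight nonzero entries e1, e2, u1, v1, u2, v2, u3, v3 of a form a basis
   of O, and the trace form tr(xy) is nondegenerate.  Polarizing the norm and
   using tr((xy)z) = tr(x(yz)) together with the identity for
   tr((xy)z) + tr((yx)z), the invariants of S_n^(3) give tr(b_i b_j) =
   tr(a_i a_j) and tr((b_i b_j) b_k) = tr((a_i a_j) a_k) for all indices, not
   only increasing ones.  The linear map g sending a_k to b_k (k < 8) therefore
   preserves both forms; it is injective, hence invertible, and multiplicative
   because xy is determined by the linear form z |-> tr((xy)z).  Nondegeneracy
   also gives b_i = g(a_i) for every i, so b lies in the G2-orbit of a. *)

From HB Require Import structures.
From mathcomp Require Import all_boot all_order all_algebra.
From mathcomp Require Import ring.
Set Implicit Arguments. Unset Strict Implicit. Unset Printing Implicit Defensive.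
Import GRing.Theory.
Local Open Scope ring_scope.

Local Notation o8 k := (@Ordinal 8 k isT).

Lemma ord8P (P : 'I_8 -> Prop) :
  P (o8 0) -> P (o8 1) -> P (o8 2) -> P (o8 3) ->
  P (o8 4) -> P (o8 5) -> P (o8 6) -> P (o8 7) -> forall p, P p.
Proof.
move=> ? ? ? ? ? ? ? ? [[|[|[|[|[|[|[|[|//]]]]]]]] hp].
all: by rewrite (bool_irrelevance hp isT).
Qed.

Section Octonions.
Variable F : fieldType.
Local Notation oct := (oct F).

Definition ocoord (x : oct) : 'rV[F]_8 := \row_(p < 8)
  match val p with
  | 0 => oal x | 1 => obe x | 2 => c1 (ou x) | 3 => c1 (ov x)
  | 4 => c2 (ou x) | 5 => c2 (ov x) | 6 => c3 (ou x) | _ => c3 (ov x)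
  end.

Definition ofcoord (v : 'rV[F]_8) : oct :=
  Oct (v 0 (o8 0)) (V3 (v 0 (o8 2)) (v 0 (o8 4)) (v 0 (o8 6)))
      (V3 (v 0 (o8 3)) (v 0 (o8 5)) (v 0 (o8 7))) (v 0 (o8 1)).

Lemma ocoordK : cancel ocoord ofcoord.
Proof. by case=> ? [? ? ?] [? ? ?] ?; rewrite /ofcoord !mxE. Qed.

Lemma ofcoordK : cancel ofcoord ocoord.
Proof. by move=> v; apply/rowP; elim/ord8P; rewrite mxE. Qed.

Implicit Types x y z w : oct.

Lemma ocoordD x y : ocoord (oadd x y) = ocoord x + ocoord y.
Proof. by apply/rowP; elim/ord8P; rewrite !mxE. Qed.

Lemma ocoordZ k x : ocoord (oscale k x) = k *: ocoord x.
Proof. by apply/rowP; elim/ord8P; rewrite !mxE. Qed.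

Definition obasis (k : 'I_8) : oct := ofcoord (delta_mx 0 k).

Lemma std_tuple_basis n (hn : (8 <= n)%N) k :
  std_tuple F (widen_ord hn k) = obasis k.
Proof. by elim/ord8P: k; rewrite /obasis /ofcoord !mxE. Qed.

Definition tr2 (x y : oct) : F := otr (omul x y).
Definition tr3 (x y z : oct) : F := otr (omul (omul x y) z).

Ltac oct_ring :=
  cbv [tr2 tr3 otr onorm omul vdot vadd vscale vopp vcross oal ou ov obe c1 c2 c3];
  ring.

Lemma tr2C x y : tr2 x y = tr2 y x.
Proof. by oct_ring. Qed.

Lemma tr2xx x : tr2 x x = otr x ^+ 2 - 2 * onorm x.
Proof. by oct_ring. Qed.

Lemma tr3xx x y : tr3 x x y = otr x * tr2 x y - onorm x * otr y.
Proof. by oct_ring. Qed.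

Lemma tr3_swap x y z : tr3 x y z + tr3 y x z =
  otr z * tr2 x y + otr y * tr2 x z + otr x * tr2 y z - otr x * otr y * otr z.
Proof. by oct_ring. Qed.

Lemma tr3E x y z : tr3 x y z = tr2 x (omul y z).
Proof. by oct_ring. Qed.

Lemma oct_tr2E x :
  x = Oct (tr2 x (oe1 F))
          (V3 (tr2 x (ov_ (cv1 F))) (tr2 x (ov_ (cv2 F))) (tr2 x (ov_ (cv3 F))))
          (V3 (tr2 x (ou_ (cv1 F))) (tr2 x (ou_ (cv2 F))) (tr2 x (ou_ (cv3 F))))
          (tr2 x (oe2 F)).
Proof.
case: x => ? [? ? ?] [? ? ?] ?; congr (Oct _ (V3 _ _ _) (V3 _ _ _) _).
all: by rewrite /oe1 /oe2 /ou_ /ov_ /cv1 /cv2 /cv3 /vzero; oct_ring.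
Qed.

Lemma tr3_rot x y z : tr3 x y z = tr3 y z x.
Proof. by rewrite tr3E tr2C. Qed.

Lemma tr2_nondeg x y : (forall w, tr2 x w = tr2 y w) -> x = y.
Proof. by move=> H; rewrite (oct_tr2E x) (oct_tr2E y) !H. Qed.

Definition coord_linear (phi : oct -> F) :=
  forall x, phi x = \sum_k ocoord x 0 k * phi (obasis k).

Lemma tr2_linear y : coord_linear (tr2^~ y).
Proof.
move=> x; rewrite !big_ord_recr big_ord0 /= /obasis /ofcoord !mxE /=.
by oct_ring.
Qed.

Lemma tr2_linear_r x : coord_linear (tr2 x).
Proof.
by move=> y; rewrite tr2C tr2_linear; apply: eq_bigr => k _; rewrite tr2C.
Qed.

Lemma tr3_linear y z : coord_linear (fun x => tr3 x y z).
Proof.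
by move=> x; rewrite /= tr3E tr2_linear; apply: eq_bigr => k _; rewrite tr3E.
Qed.

Lemma tr3_linear_m x z : coord_linear (fun y => tr3 x y z).
Proof.
move=> y; rewrite /= tr3_rot tr3_linear; apply: eq_bigr => k _.
by rewrite /= (tr3_rot x).
Qed.

Lemma tr3_linear_r x y : coord_linear (tr3 x y).
Proof.
move=> z; rewrite -tr3_rot tr3_linear; apply: eq_bigr => k _.
by rewrite /= (tr3_rot _ x).
Qed.

End Octonions.

Section LinearExtension.
Variables (F : fieldType) (b : 'I_8 -> oct F).
Local Notation oct := (oct F).
Local Notation obasis := (obasis F).
Implicit Types x y z : oct.

Definition ext_mx : 'M[F]_8 := \matrix_k ocoord (b k).

Definition lin_ext x : oct := ofcoord (ocoord x *m ext_mx).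

Lemma lin_extD x y : lin_ext (oadd x y) = oadd (lin_ext x) (lin_ext y).
Proof.
by apply: (can_inj (@ocoordK F)); rewrite ocoordD !ofcoordK ocoordD mulmxDl.
Qed.

Lemma lin_extZ k x : lin_ext (oscale k x) = oscale k (lin_ext x).
Proof.
by apply: (can_inj (@ocoordK F)); rewrite ocoordZ !ofcoordK ocoordZ scalemxAl.
Qed.

Lemma coord_linear_lin_ext phi x :
  coord_linear phi -> phi (lin_ext x) = \sum_k ocoord x 0 k * phi (b k).
Proof.
move=> phiL; rewrite phiL /lin_ext ofcoordK.
under eq_bigr do rewrite mxE mulr_suml.
rewrite exchange_big; apply: eq_bigr => k _ /=.
rewrite [phi (b k)]phiL mulr_sumr; apply: eq_bigr => p _.
by rewrite /ext_mx mxE mulrA.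
Qed.

Hypothesis tr2_b : forall k m, tr2 (b k) (b m) = tr2 (obasis k) (obasis m).
Hypothesis tr3_b : forall k m l,
  tr3 (b k) (b m) (b l) = tr3 (obasis k) (obasis m) (obasis l).

Lemma tr2_lin_ext x y : tr2 (lin_ext x) (lin_ext y) = tr2 x y.
Proof.
rewrite (coord_linear_lin_ext _ (tr2_linear _)) [RHS]tr2_linear.
apply: eq_bigr => k _; congr (_ * _).
rewrite (coord_linear_lin_ext _ (tr2_linear_r _)) [RHS]tr2_linear_r.
by apply: eq_bigr => m _; rewrite tr2_b.
Qed.

Lemma tr3_lin_ext x y z : tr3 (lin_ext x) (lin_ext y) (lin_ext z) = tr3 x y z.
Proof.
rewrite (coord_linear_lin_ext _ (tr3_linear _ _)) [RHS]tr3_linear.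
apply: eq_bigr => k _; congr (_ * _).
rewrite (coord_linear_lin_ext _ (tr3_linear_m _ _)) [RHS]tr3_linear_m.
apply: eq_bigr => m _; congr (_ * _).
rewrite (coord_linear_lin_ext _ (tr3_linear_r _ _)) [RHS]tr3_linear_r.
by apply: eq_bigr => l _; rewrite tr3_b.
Qed.

Lemma lin_ext_inj : injective lin_ext.
Proof.
by move=> x y gxy; apply: tr2_nondeg => z; rewrite -tr2_lin_ext gxy tr2_lin_ext.
Qed.

Lemma ext_mx_unit : ext_mx \in unitmx.
Proof.
rewrite -row_free_unit; apply/inj_row_free => v vM0.
apply: (can_inj (@ofcoordK F)); apply: lin_ext_inj.
by rewrite /lin_ext !ofcoordK vM0 mul0mx.
Qed.

Definition lin_ext_inv y : oct := ofcoord (ocoord y *m invmx ext_mx).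

Lemma lin_extK : cancel lin_ext lin_ext_inv.
Proof.
by move=> x; rewrite /lin_ext_inv /lin_ext ofcoordK mulmxK ?ocoordK // ext_mx_unit.
Qed.

Lemma lin_ext_invK : cancel lin_ext_inv lin_ext.
Proof.
by move=> y; rewrite /lin_ext_inv /lin_ext ofcoordK mulmxKV ?ocoordK // ext_mx_unit.
Qed.

Lemma lin_extM x y : lin_ext (omul x y) = omul (lin_ext x) (lin_ext y).
Proof.
apply: tr2_nondeg => w; rewrite -[w]lin_ext_invK tr2_lin_ext.
exact: esym (tr3_lin_ext x y _).
Qed.

Lemma lin_ext_G2 : is_G2 lin_ext.
Proof.
split; [exact: lin_extD | exact: lin_extZ | exact: lin_extM |].
exact: Bijective lin_extK lin_ext_invK.
Qed.

Lemma lin_ext_from_tr2 y y' :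
  (forall k, tr2 y (b k) = tr2 y' (obasis k)) -> y = lin_ext y'.
Proof.
move=> Hy; apply: tr2_nondeg => w; rewrite -[w]lin_ext_invK tr2_lin_ext.
rewrite (coord_linear_lin_ext _ (tr2_linear_r y)) [RHS]tr2_linear_r.
by apply: eq_bigr => k _; rewrite Hy.
Qed.

End LinearExtension.

Lemma perm3_ind n (P : 'I_n -> 'I_n -> 'I_n -> Prop) :
  (forall i j k, P i j k -> P j k i) -> (forall i j k, P i j k -> P j i k) ->
  (forall i j k : 'I_n, (i <= j <= k)%N -> P i j k) -> forall i j k, P i j k.
Proof.
move=> rot swap sorted i j k.
case: (leqP i j) => ij; case: (leqP j k) => jk.
- by apply: sorted; rewrite ij jk.
- case: (leqP i k) => ik; apply: (rot).
    by apply: (swap); apply: sorted; rewrite ik (ltnW jk).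
  by apply: sorted; rewrite (ltnW ik) ij.
- case: (leqP i k) => ik.
    by apply: (swap); apply: sorted; rewrite (ltnW ij) ik.
  by apply: (rot); apply: (rot); apply: sorted; rewrite jk (ltnW ik).
- apply: (rot); apply: (rot); apply: (swap).
  by apply: sorted; rewrite (ltnW jk) (ltnW ij).
Qed.

Section Invariants.
Variables (F : fieldType) (n : nat) (a b : 'I_n -> oct F).
Hypothesis Hab : S3_agree a b.

Lemma S3_agree_tr2 i j : tr2 (b i) (b j) = tr2 (a i) (a j).
Proof.
have [nrm tr tr2_lt _] := Hab.
case: (ltngtP i j) => [ij | ji | /val_inj ->].
- by rewrite /tr2 tr2_lt.
- by rewrite tr2C [RHS]tr2C /tr2 tr2_lt.
- by rewrite !tr2xx nrm tr.
Qed.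

Lemma S3_agree_tr3 i j k : tr3 (b i) (b j) (b k) = tr3 (a i) (a j) (a k).
Proof.
have [nrm tr _ tr3_lt] := Hab.
move: i j k; apply: perm3_ind => i j k.
- by move=> H; rewrite -tr3_rot H tr3_rot.
- move=> H; apply: (addrI (tr3 (b i) (b j) (b k))).
  by rewrite tr3_swap H tr3_swap !S3_agree_tr2 -!tr.
- case/andP; rewrite leq_eqVlt => /orP[/eqP/val_inj -> _ | ij].
    by rewrite !tr3xx S3_agree_tr2 -!nrm -!tr.
  rewrite leq_eqVlt => /orP[/eqP/val_inj -> | jk].
    by rewrite (tr3_rot (b i)) (tr3_rot (a i)) !tr3xx S3_agree_tr2 -!nrm -!tr.
  by rewrite /tr3 tr3_lt.
Qed.

End Invariants.

Lemma is_G2_comp (F : fieldType) (f g : oct F -> oct F) :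
  is_G2 f -> is_G2 g -> is_G2 (f \o g).
Proof.
case=> fD fZ fM f_bij [gD gZ gM g_bij]; split => /=.
- by move=> x y; rewrite gD fD.
- by move=> k x; rewrite gZ fZ.
- by move=> x y; rewrite gM fM.
- exact: bij_comp.
Qed.

Lemma is_G2_inv (F : fieldType) (g : oct F -> oct F) :
  is_G2 g -> exists h, [/\ is_G2 h, cancel g h & cancel h g].
Proof.
case=> gD gZ gM [h gK hK]; exists h; split => //; split.
- by move=> x y; apply: (can_inj gK); rewrite gD !hK.
- by move=> k x; apply: (can_inj gK); rewrite gZ !hK.
- by move=> x y; apply: (can_inj gK); rewrite gM !hK.
- exact: Bijective hK gK.
Qed.

Lemma G2orbit_transport (F : fieldType) n (a b : 'I_n -> oct F) g :
  is_G2 g -> (forall i, b i = g (a i)) ->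
  forall c, G2orbit a c <-> G2orbit b c.
Proof.
move=> gG bE c; have [h [hG gK _]] := is_G2_inv gG; split.
- case=> f [fG cE]; exists (f \o h); split; first exact: is_G2_comp.
  by move=> i; rewrite cE bE /= gK.
- case=> f [fG cE]; exists (f \o g); split; first exact: is_G2_comp.
  by move=> i; rewrite cE bE.
Qed.

Theorem lemma7p9 (F : closedFieldType) (hchar : 2%N \in [pchar F])
  (n : nat) (hn : (8 <= n)%N) (b : 'I_n -> oct F) :
  S3_agree (@std_tuple F n) b ->
  forall c : 'I_n -> oct F, G2orbit (@std_tuple F n) c <-> G2orbit b c.
Proof.
move=> Hab.
pose b8 k := b (widen_ord hn k).
have a_basis := std_tuple_basis F hn.
have tr2_b8 k m : tr2 (b8 k) (b8 m) = tr2 (obasis F k) (obasis F m).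
  by rewrite /b8 (S3_agree_tr2 Hab) !a_basis.
have tr3_b8 k m l :
    tr3 (b8 k) (b8 m) (b8 l) = tr3 (obasis F k) (obasis F m) (obasis F l).
  by rewrite /b8 (S3_agree_tr3 Hab) !a_basis.
apply: (G2orbit_transport (lin_ext_G2 tr2_b8 tr3_b8)) => i.
apply: (lin_ext_from_tr2 tr2_b8) => k.
by rewrite /b8 (S3_agree_tr2 Hab) a_basis.
Qed.
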